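(* In the non-symmetric 2-colored operad $\mathbb V^{(d)}$ described below, the rewriting system $$m_{ss}(m_{ss}(x_1,x_2),x_3)\to m_{ss}(x_1,m_{ss}(x_2,x_3)),\quad m_{ts}(m_{ts}(x_1,x_2),x_3)\to m_{ts}(x_1,m_{ss}(x_2,x_3)),$$ $$m_{ts}(m_{st}(x_1,x_2),x_3)\to m_{st}(x_1,m_{ts}(x_2,x_3)),\quad m_{st}(m_{ss}(x_1,x_2),x_3)\to m_{st}(x_1,m_{st}(x_2,x_3)),$$ $$u(m_{ts}(x_1,x_2))\to m_{ss}(u(x_1),x_2),\quad u(m_{st}(x_1,x_2))\to m_{ss}(x_1,u(x_2))$$ is convergent (terminating and confluent).
   Context: Colors: straight $s$ and dotted $t$. $\mathbb V^{(d)}$ is the non-symmetric 2-colored operad generated by three binary operations of degree $0$: $m_{ss}$ (inputs $s,s$; output $s$), $m_{ts}$ (inputs $t,s$; output $t$), $m_{st}$ (inputs $s,t$; output $t$), and a unary operation $u$ of degree $d$ (input $t$; output $s$), subject to the six relations obtained by replacing each arrow above by an equality. A rewriting system for a non-symmetric operad consists of rules $\tau\to f$ ($\tau$ a planar tree monomial), reducing monomials by replacing a divisor $\tau$ with $f$; it is terminating if there is no infinite chain of reductions and confluent if every ambiguity (two leading monomials overlapping in a common vertex) yields an S-polynomial that reduces to zero. *)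

From Stdlib Require Import Relations.

Inductive color : Type := s | t.

(* Planar tree monomials with output color c.  A leaf [inp c] is an input of
   color c (inputs are implicitly numbered left to right: non-symmetric). *)
Inductive tree : color -> Type :=
| inp : forall c : color, tree c
| m_ss : tree s -> tree s -> tree s
| m_ts : tree t -> tree s -> tree t
| m_st : tree s -> tree t -> tree t
| u : tree t -> tree s.

(* One rewriting step: replace a divisor matching the left-hand side of a rule
   (x1, x2, x3 are arbitrary subtrees grafted at the leaves of the divisor) by
   the right-hand side, anywhere in the tree. *)
Inductive step : forall c : color, tree c -> tree c -> Prop :=
| r_ss (x1 x2 x3 : tree s) :
    step s (m_ss (m_ss x1 x2) x3) (m_ss x1 (m_ss x2 x3))
| r_ts (x1 : tree t) (x2 x3 : tree s) :
    step t (m_ts (m_ts x1 x2) x3) (m_ts x1 (m_ss x2 x3))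
| r_tst (x1 : tree s) (x2 : tree t) (x3 : tree s) :
    step t (m_ts (m_st x1 x2) x3) (m_st x1 (m_ts x2 x3))
| r_st (x1 x2 : tree s) (x3 : tree t) :
    step t (m_st (m_ss x1 x2) x3) (m_st x1 (m_st x2 x3))
| r_uts (x1 : tree t) (x2 : tree s) :
    step s (u (m_ts x1 x2)) (m_ss (u x1) x2)
| r_ust (x1 : tree s) (x2 : tree t) :
    step s (u (m_st x1 x2)) (m_ss x1 (u x2))
| c_ss_l (a a' b : tree s) : step s a a' -> step s (m_ss a b) (m_ss a' b)
| c_ss_r (a b b' : tree s) : step s b b' -> step s (m_ss a b) (m_ss a b')
| c_ts_l (a a' : tree t) (b : tree s) : step t a a' -> step t (m_ts a b) (m_ts a' b)
| c_ts_r (a : tree t) (b b' : tree s) : step s b b' -> step t (m_ts a b) (m_ts a b')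
| c_st_l (a a' : tree s) (b : tree t) : step s a a' -> step t (m_st a b) (m_st a' b)
| c_st_r (a : tree s) (b b' : tree t) : step t b b' -> step t (m_st a b) (m_st a b')
| c_u (a a' : tree t) : step t a a' -> step s (u a) (u a').

Definition terminating : Prop :=
  forall (c : color) (f : nat -> tree c), ~ (forall n, step c (f n) (f (S n))).

Definition confluent : Prop :=
  forall (c : color) (x y z : tree c),
    clos_refl_trans (tree c) (step c) x y ->
    clos_refl_trans (tree c) (step c) x z ->
    exists w, clos_refl_trans (tree c) (step c) y w /\
              clos_refl_trans (tree c) (step c) z w.

Definition convergent : Prop := terminating /\ confluent.

(* Termination: the weight w(inp) = 1, w(m(a, b)) = 2 w(a) + w(b), w(u a) = 3 w(a)
   strictly decreases along every rule and is monotone in every argument.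
   Confluence: read a monomial as the left-to-right word of the colors of its
   inputs, remembering, for a dotted output, where the input on the output path
   sits.  Every rule preserves this reading, and every monomial rewrites to the
   comb of the letters [inp s] and [u (inp t)] determined by its reading, so any
   two reducts of a monomial have a common reduct. *)
From Stdlib Require Import Relations List Lia.
Import ListNotations.

Section AbstractRewriting.

Variables (A : Type) (R : relation A).

Lemma no_infinite_chain_of_measure (m : A -> nat) :
  (forall x y, R x y -> m y < m x) ->
  forall f : nat -> A, ~ (forall n, R (f n) (f (S n))).
Proof.
  intros m_lt f chain.
  assert (bound : forall n, m (f n) + n <= m (f 0)).
  { induction n as [|n IH]; [lia|]. specialize (m_lt _ _ (chain n)). lia. }
  specialize (bound (S (m (f 0)))). lia.
Qed.

Lemma clos_refl_trans_invariant {B} (inv : A -> B) :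
  (forall x y, R x y -> inv x = inv y) ->
  forall x y, clos_refl_trans A R x y -> inv x = inv y.
Proof.
  intros inv_step x y xy.
  induction xy; [apply inv_step; assumption | reflexivity | congruence].
Qed.

Lemma confluent_of_canonical_forms {B} (inv : A -> B) (nf : B -> A) :
  (forall x y, R x y -> inv x = inv y) ->
  (forall x, clos_refl_trans A R x (nf (inv x))) ->
  forall x y z, clos_refl_trans A R x y -> clos_refl_trans A R x z ->
  exists w, clos_refl_trans A R y w /\ clos_refl_trans A R z w.
Proof.
  intros inv_step to_nf x y z xy xz.
  exists (nf (inv y)); split; [apply to_nf|].
  rewrite <- (clos_refl_trans_invariant inv inv_step _ _ xy),
          (clos_refl_trans_invariant inv inv_step _ _ xz).
  apply to_nf.
Qed.

End AbstractRewriting.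

Lemma clos_refl_trans_map {A B} (R : relation A) (S : relation B) (f : A -> B) :
  (forall x y, R x y -> S (f x) (f y)) ->
  forall x y, clos_refl_trans A R x y -> clos_refl_trans B S (f x) (f y).
Proof.
  intros f_step x y xy; induction xy.
  - now apply rt_step, f_step.
  - apply rt_refl.
  - eapply rt_trans; eassumption.
Qed.

Fixpoint weight {c} (x : tree c) : nat :=
  match x with
  | inp _ => 1
  | m_ss a b | m_ts a b | m_st a b => 2 * weight a + weight b
  | u a => 3 * weight a
  end.

Lemma weight_pos {c} (x : tree c) : 1 <= weight x.
Proof. induction x; cbn; lia. Qed.

Lemma step_weight_lt c (x y : tree c) : step c x y -> weight y < weight x.
Proof.
  induction 1; cbn [weight]; try lia.
  all: pose proof (weight_pos x1); pose proof (weight_pos x2); lia.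
Qed.

Notation steps c := (clos_refl_trans (tree c) (step c)).

Lemma steps_m_ss a a' b b' : steps s a a' -> steps s b b' -> steps s (m_ss a b) (m_ss a' b').
Proof.
  intros aa' bb'; apply rt_trans with (m_ss a' b).
  - exact (clos_refl_trans_map _ _ (fun x => m_ss x b) (fun x y => c_ss_l x y b) _ _ aa').
  - exact (clos_refl_trans_map _ _ (m_ss a') (c_ss_r a') _ _ bb').
Qed.

Lemma steps_m_ts a a' b b' : steps t a a' -> steps s b b' -> steps t (m_ts a b) (m_ts a' b').
Proof.
  intros aa' bb'; apply rt_trans with (m_ts a' b).
  - exact (clos_refl_trans_map _ _ (fun x => m_ts x b) (fun x y => c_ts_l x y b) _ _ aa').
  - exact (clos_refl_trans_map _ _ (m_ts a') (c_ts_r a') _ _ bb').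
Qed.

Lemma steps_m_st a a' b b' : steps s a a' -> steps t b b' -> steps t (m_st a b) (m_st a' b').
Proof.
  intros aa' bb'; apply rt_trans with (m_st a' b).
  - exact (clos_refl_trans_map _ _ (fun x => m_st x b) (fun x y => c_st_l x y b) _ _ aa').
  - exact (clos_refl_trans_map _ _ (m_st a') (c_st_r a') _ _ bb').
Qed.

Lemma steps_u a a' : steps t a a' -> steps s (u a) (u a').
Proof. apply clos_refl_trans_map, c_u. Qed.

(* A color-[s] monomial reads as a word of input colors; a color-[t] monomial as
   the two words to the left and to the right of its input on the output path. *)
Definition reading (c : color) : Type :=
  match c with s => list color | t => (list color * list color)%type end.

Fixpoint word {c} (x : tree c) : reading c :=
  match x in tree c return reading c with
  | inp s => [s]
  | inp t => ([], [])
  | m_ss a b => word a ++ word b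
  | m_ts a b => (fst (word a), snd (word a) ++ word b)
  | m_st a b => (word a ++ fst (word b), snd (word b))
  | u a => fst (word a) ++ t :: snd (word a)
  end.

Lemma step_word c (x y : tree c) : step c x y -> word x = word y.
Proof. induction 1; cbn; rewrite ?IHstep, <- ?app_assoc; reflexivity. Qed.

Lemma word_s_neq_nil (x : tree s) : word x <> [].
Proof.
  enough (H : forall c (x : tree c),
    match c return tree c -> Prop with s => fun x => word x <> [] | t => fun _ => True end x)
    by exact (H s x).
  clear x; intros c x; induction x as [[]| | | |]; cbn; trivial; try discriminate.
  all: intros E; apply app_eq_nil in E as [E1 E2]; congruence.
Qed.

Definition letter (c : color) : tree s :=
  match c with s => inp s | t => u (inp t) end.

Fixpoint comb (a : color) (w : list color) : tree s :=
  match w with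
  | [] => letter a
  | b :: w' => m_ss (letter a) (comb b w')
  end.

(* The empty word reads no color-[s] monomial; [inp s] is a junk value. *)
Definition comb_s (w : list color) : tree s :=
  match w with [] => inp s | a :: w' => comb a w' end.

Fixpoint comb_t (l r : list color) : tree t :=
  match l with
  | [] => match r with [] => inp t | a :: r' => m_ts (inp t) (comb a r') end
  | a :: l' => m_st (letter a) (comb_t l' r)
  end.

Definition normal_form (c : color) : reading c -> tree c :=
  match c with s => comb_s | t => fun p => comb_t (fst p) (snd p) end.

Lemma steps_m_ss_comb a l b r :
  steps s (m_ss (comb a l) (comb b r)) (comb a (l ++ b :: r)).
Proof.
  revert a; induction l as [|a' l IH]; intros a; cbn; [apply rt_refl|].
  eapply rt_trans; [apply rt_step, r_ss|].
  apply steps_m_ss; [apply rt_refl | apply IH].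
Qed.

Lemma steps_m_ts_comb l r b r' :
  steps t (m_ts (comb_t l r) (comb b r')) (comb_t l (r ++ b :: r')).
Proof.
  induction l as [|a l IH]; cbn.
  - destruct r as [|a r]; cbn; [apply rt_refl|].
    eapply rt_trans; [apply rt_step, r_ts|].
    apply steps_m_ts; [apply rt_refl | apply steps_m_ss_comb].
  - eapply rt_trans; [apply rt_step, r_tst|].
    apply steps_m_st; [apply rt_refl | apply IH].
Qed.

Lemma steps_m_st_comb a l l' r :
  steps t (m_st (comb a l) (comb_t l' r)) (comb_t (a :: l ++ l') r).
Proof.
  revert a; induction l as [|a' l IH]; intros a; cbn; [apply rt_refl|].
  eapply rt_trans; [apply rt_step, r_st|].
  apply steps_m_st; [apply rt_refl | apply IH].
Qed.

Lemma steps_u_comb l r : steps s (u (comb_t l r)) (comb_s (l ++ t :: r)).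
Proof.
  induction l as [|a l IH]; cbn.
  - destruct r as [|a r]; cbn; [apply rt_refl|].
    apply rt_step, r_uts.
  - eapply rt_trans; [apply rt_step, r_ust|].
    destruct l; exact (steps_m_ss _ _ _ _ (rt_refl _ _ _) IH).
Qed.

Lemma steps_normal_form c (x : tree c) : steps c x (normal_form c (word x)).
Proof.
  induction x as [[]|x1 IH1 x2 IH2|x1 IH1 x2 IH2|x1 IH1 x2 IH2|x IH]; cbn in *.
  1, 2: apply rt_refl.
  - destruct (word x1) as [|a l] eqn:E1; [now destruct (word_s_neq_nil x1)|].
    destruct (word x2) as [|b r] eqn:E2; [now destruct (word_s_neq_nil x2)|].
    eapply rt_trans; [apply (steps_m_ss _ _ _ _ IH1 IH2)|].
    apply steps_m_ss_comb.
  - destruct (word x2) as [|b r] eqn:E2; [now destruct (word_s_neq_nil x2)|].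
    eapply rt_trans; [apply (steps_m_ts _ _ _ _ IH1 IH2)|].
    apply steps_m_ts_comb.
  - destruct (word x1) as [|a l] eqn:E1; [now destruct (word_s_neq_nil x1)|].
    eapply rt_trans; [apply (steps_m_st _ _ _ _ IH1 IH2)|].
    apply steps_m_st_comb.
  - eapply rt_trans; [apply (steps_u _ _ IH)|].
    apply steps_u_comb.
Qed.

Theorem theorem4p11 : convergent.
Proof.
  split.
  - intros c. exact (no_infinite_chain_of_measure _ (step c) weight (step_weight_lt c)).
  - intros c.
    exact (confluent_of_canonical_forms _ (step c) word (normal_form c)
             (step_word c) (steps_normal_form c)).
Qed.
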